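(* For a nondegenerate m-triangle, the torque $\mathbf t_1$ of the gravitational forces at $P_1$ with respect to the center of mass vanishes if and only if $r_{12}=r_{13}$, and all three torques $\mathbf t_1,\mathbf t_2,\mathbf t_3$ vanish if and only if the triangle is equilateral.
   Context: Masses $m_1,m_2,m_3>0$, $m_1+m_2+m_3=1$; position vectors $\mathbf a_i=\overrightarrow{OP_i}$ with $\sum m_i\mathbf a_i=0$; $r_{ij}=|\mathbf a_i-\mathbf a_j|$; $\mathbf t_i=\mathbf a_i\times\sum_{j\ne i}\frac{m_im_j}{r_{ij}^3}(\mathbf a_j-\mathbf a_i)$; nondegenerate means $P_1,P_2,P_3$ are not collinear. *)

From Stdlib Require Import Reals.
Open Scope R_scope.

Record vec3 : Type := V3 { vx : R; vy : R; vz : R }.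

Definition vzero : vec3 := V3 0 0 0.
Definition vadd (u v : vec3) : vec3 := V3 (vx u + vx v) (vy u + vy v) (vz u + vz v).
Definition vsub (u v : vec3) : vec3 := V3 (vx u - vx v) (vy u - vy v) (vz u - vz v).
Definition vscale (c : R) (u : vec3) : vec3 := V3 (c * vx u) (c * vy u) (c * vz u).
Definition vdot (u v : vec3) : R := vx u * vx v + vy u * vy v + vz u * vz v.
Definition vnorm (u : vec3) : R := sqrt (vdot u u).
Definition vcross (u v : vec3) : vec3 :=
  V3 (vy u * vz v - vz u * vy v)
     (vz u * vx v - vx u * vz v)
     (vx u * vy v - vy u * vx v).

Definition rdist (u v : vec3) : R := vnorm (vsub u v).

Definition torque (mi mj mk : R) (ai aj ak : vec3) : vec3 :=
  vcross ai (vadd (vscale (mi * mj / (rdist ai aj) ^ 3) (vsub aj ai))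
                  (vscale (mi * mk / (rdist ai ak) ^ 3) (vsub ak ai))).

Definition nondegenerate (a1 a2 a3 : vec3) : Prop :=
  vcross (vsub a2 a1) (vsub a3 a1) <> vzero.

Definition equilateral (a1 a2 a3 : vec3) : Prop :=
  rdist a1 a2 = rdist a1 a3 /\ rdist a1 a2 = rdist a2 a3.

(* With the centre of mass at the origin, m_i a_i = -(m_j a_j + m_k a_k), so both
   cross products a_i x a_j and a_i x a_k are multiples of a_j x a_k and
   t_i = m_j m_k (r_ij^-3 - r_ik^-3) (a_j x a_k).  The same substitution gives
   (a_j - a_i) x (a_k - a_i) = (M / m_i) (a_j x a_k) with M the total mass, so a_j x a_k
   is nonzero for a nondegenerate triangle, and t_i vanishes iff r_ij = r_ik.
   Applying this at each vertex gives the equilateral characterisation. *)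

From Stdlib Require Import Reals Lra Psatz.
Open Scope R_scope.

Lemma pow_lt_compat_l (x y : R) (n : nat) : 0 <= x < y -> x ^ S n < y ^ S n.
Proof.
  intros Hxy; induction n as [|n IH]; simpl in *; [lra|].
  pose proof (pow_le x (S n) (proj1 Hxy)); simpl in *; nra.
Qed.

Lemma pow_inj_l (x y : R) (n : nat) : 0 <= x -> 0 <= y -> x ^ S n = y ^ S n -> x = y.
Proof.
  intros Hx Hy E.
  destruct (Rtotal_order x y) as [Hlt | [Heq | Hgt]]; [| exact Heq |].
  - pose proof (pow_lt_compat_l x y n (conj Hx Hlt)); lra.
  - pose proof (pow_lt_compat_l y x n (conj Hy Hgt)); lra.
Qed.

Lemma vadd_comm (u v : vec3) : vadd u v = vadd v u.
Proof. destruct u, v; unfold vadd; simpl; f_equal; ring. Qed.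

Lemma vadd_assoc (u v w : vec3) : vadd u (vadd v w) = vadd (vadd u v) w.
Proof. destruct u, v, w; unfold vadd; simpl; f_equal; ring. Qed.

Lemma vscale_eq0 (c : R) (v : vec3) : vscale c v = vzero <-> c = 0 \/ v = vzero.
Proof.
  destruct v as [x y z]; unfold vscale, vzero; simpl; split.
  - intros E; injection E as Ex Ey Ez.
    destruct (Req_dec c 0) as [Hc | Hc]; [now left | right].
    f_equal; [apply (Rmult_eq_reg_l c) .. ]; lra.
  - intros [-> | E]; [| injection E as -> -> ->]; f_equal; ring.
Qed.

Lemma vdot_self_ge0 (v : vec3) : 0 <= vdot v v.
Proof. destruct v as [x y z]; unfold vdot; simpl; nra. Qed.

Lemma vdot_self_eq0 (v : vec3) : vdot v v = 0 -> v = vzero.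
Proof.
  destruct v as [x y z]; unfold vdot, vzero; simpl; intros E.
  f_equal; nra.
Qed.

Lemma rdist_sym (a b : vec3) : rdist a b = rdist b a.
Proof. unfold rdist, vnorm; f_equal; destruct a, b; unfold vdot, vsub; simpl; ring. Qed.

Lemma rdist_pos (a b : vec3) : a <> b -> 0 < rdist a b.
Proof.
  intros Hab; unfold rdist, vnorm; apply sqrt_lt_R0.
  destruct (vdot_self_ge0 (vsub a b)) as [Hpos | E]; [exact Hpos | exfalso; apply Hab].
  apply eq_sym, vdot_self_eq0 in E.
  destruct a, b; unfold vsub, vzero in E; simpl in E; injection E as Ex Ey Ez.
  f_equal; lra.
Qed.

Lemma nondegenerate_neq (a1 a2 a3 : vec3) :
  nondegenerate a1 a2 a3 -> a1 <> a2 /\ a1 <> a3.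
Proof.
  unfold nondegenerate; intros Hnd; split; intros E; apply Hnd; rewrite E;
    destruct a2, a3; unfold vcross, vsub, vzero; simpl; f_equal; ring.
Qed.

Lemma nondegenerate_swap12 (a1 a2 a3 : vec3) :
  nondegenerate a1 a2 a3 -> nondegenerate a2 a1 a3.
Proof.
  unfold nondegenerate; intros Hnd E; apply Hnd.
  assert (Eswap : vcross (vsub a1 a2) (vsub a3 a2)
                  = vscale (-1) (vcross (vsub a2 a1) (vsub a3 a1)))
    by (destruct a1, a2, a3; unfold vcross, vsub, vscale; simpl; f_equal; ring).
  rewrite Eswap, vscale_eq0 in E; destruct E as [E | E]; [lra | exact E].
Qed.

Lemma nondegenerate_rotr (a1 a2 a3 : vec3) :
  nondegenerate a1 a2 a3 -> nondegenerate a3 a1 a2.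
Proof.
  unfold nondegenerate.
  replace (vcross (vsub a1 a3) (vsub a2 a3)) with (vcross (vsub a2 a1) (vsub a3 a1));
    [easy|].
  destruct a1, a2, a3; unfold vcross, vsub; simpl; f_equal; ring.
Qed.

Section CentreOfMass.

Variables (mi mj mk : R) (ai aj ak : vec3).
Hypothesis mi_neq0 : mi <> 0.
Hypothesis centre_of_mass :
  vadd (vadd (vscale mi ai) (vscale mj aj)) (vscale mk ak) = vzero.

Lemma centre_of_mass_solve :
  ai = vscale (- / mi) (vadd (vscale mj aj) (vscale mk ak)).
Proof.
  destruct ai as [x1 y1 z1], aj as [x2 y2 z2], ak as [x3 y3 z3].
  unfold vadd, vscale, vzero in *; simpl in *.
  injection centre_of_mass as Ex Ey Ez.
  f_equal; field_simplify_eq; lra.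
Qed.

Lemma torque_centre_of_mass :
  torque mi mj mk ai aj ak
  = vscale (mj * mk * (/ rdist ai aj ^ 3 - / rdist ai ak ^ 3)) (vcross aj ak).
Proof.
  unfold torque, Rdiv.
  set (u := / rdist ai aj ^ 3); set (v := / rdist ai ak ^ 3); clearbody u v.
  rewrite centre_of_mass_solve.
  destruct aj, ak; unfold vcross, vadd, vscale, vsub; simpl; f_equal; field; exact mi_neq0.
Qed.

Lemma cross_sides_centre_of_mass :
  vcross (vsub aj ai) (vsub ak ai) = vscale ((mi + mj + mk) / mi) (vcross aj ak).
Proof.
  rewrite centre_of_mass_solve.
  destruct aj, ak; unfold vcross, vadd, vscale, vsub; simpl; f_equal; field; exact mi_neq0.
Qed.

End CentreOfMass.

Lemma torque_eq0_iff (mi mj mk : R) (ai aj ak : vec3) :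
  0 < mi -> 0 < mj -> 0 < mk ->
  vadd (vadd (vscale mi ai) (vscale mj aj)) (vscale mk ak) = vzero ->
  nondegenerate ai aj ak ->
  torque mi mj mk ai aj ak = vzero <-> rdist ai aj = rdist ai ak.
Proof.
  intros Hi Hj Hk Hcom Hnd.
  assert (Hi0 : mi <> 0) by lra.
  assert (Hjk : vcross aj ak <> vzero).
  { intros E; apply Hnd; unfold nondegenerate.
    rewrite (cross_sides_centre_of_mass mi mj mk ai aj ak Hi0 Hcom), vscale_eq0.
    now right. }
  destruct (nondegenerate_neq ai aj ak Hnd) as [Hij Hik].
  pose proof (rdist_pos ai aj Hij); pose proof (rdist_pos ai ak Hik).
  rewrite (torque_centre_of_mass mi mj mk ai aj ak Hi0 Hcom), vscale_eq0.
  split.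
  - intros [Hc | E]; [| contradiction].
    apply (pow_inj_l _ _ 2); [lra | lra |].
    apply Rinv_eq_reg.
    destruct (Rmult_integral _ _ Hc) as [Hm | Hd]; [nra | lra].
  - intros ->; left; ring.
Qed.

Theorem mainTheorem11 (m1 m2 m3 : R) (a1 a2 a3 : vec3) :
  0 < m1 -> 0 < m2 -> 0 < m3 -> m1 + m2 + m3 = 1 ->
  vadd (vadd (vscale m1 a1) (vscale m2 a2)) (vscale m3 a3) = vzero ->
  nondegenerate a1 a2 a3 ->
  (torque m1 m2 m3 a1 a2 a3 = vzero <-> rdist a1 a2 = rdist a1 a3) /\
  ((torque m1 m2 m3 a1 a2 a3 = vzero /\
    torque m2 m1 m3 a2 a1 a3 = vzero /\
    torque m3 m1 m2 a3 a1 a2 = vzero) <-> equilateral a1 a2 a3).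
Proof.
  intros H1 H2 H3 _ Hcom Hnd.
  assert (Hcom2 : vadd (vadd (vscale m2 a2) (vscale m1 a1)) (vscale m3 a3) = vzero)
    by now rewrite (vadd_comm (vscale m2 a2)).
  assert (Hcom3 : vadd (vadd (vscale m3 a3) (vscale m1 a1)) (vscale m2 a2) = vzero)
    by now rewrite <- vadd_assoc, vadd_comm.
  rewrite (torque_eq0_iff m1 m2 m3 a1 a2 a3 H1 H2 H3 Hcom Hnd),
    (torque_eq0_iff m2 m1 m3 a2 a1 a3 H2 H1 H3 Hcom2 (nondegenerate_swap12 _ _ _ Hnd)),
    (torque_eq0_iff m3 m1 m2 a3 a1 a2 H3 H1 H2 Hcom3 (nondegenerate_rotr _ _ _ Hnd)).
  unfold equilateral; rewrite (rdist_sym a2 a1), (rdist_sym a3 a1), (rdist_sym a3 a2).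
  split; [tauto | lra].
Qed.
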